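(* Let $u$ be a one-sided Sturmian sequence with left special sequence $l=l_1l_2\dots$. Let $xl_1l_2\dots l_{n-1}$ and $wl_1\dots l_{m-1}$ with $1\le m<n$ and $x,w\in\{0,1\}$ be consecutive right special significant blocks of $\tilde X_u$, and let $y\in\{0,1\}$ with $y\neq l_n$. Then $\mathrm{sig}(xl_1l_2\dots l_{n-1}y)=\mathrm{sig}(wl_1\dots l_{m-1}y)$.
   Context: A sequence $u\in\{0,1\}^{\mathbb N}$ is Sturmian if for every $n\ge1$ exactly $n+1$ distinct blocks of length $n$ occur in $u$. $X_u^+$ is the closure of $\{\sigma^n u:n\in\mathbb N\}$, $\sigma$ the shift $(\sigma x)_i=x_{i+1}$, and $\tilde X_u=\{x\in\{0,1\}^{\mathbb Z}: x_px_{p+1}\dots\in X_u^+\ \forall p\}$; the languages of $u$, $X_u^+$, $\tilde X_u$ coincide. For each $n$ there is a unique block $L_n$ of length $n$ with $0L_n$ and $1L_n$ in the language; these are the prefixes $L_n=l_1\dots l_n$ of the left special sequence $l$. A block $v$ is right special if both $v0$ and $v1$ are in the language; the right special block of length $n$ is $l_nl_{n-1}\dots l_1$. For a block $a_{-n}\dots a_0$ in the language, $\mathrm{fol}(a_{-n}\dots a_0)=\{b_0b_1\dots\in X_u^+:\exists b\in\tilde X_u,\ b_{-n}\dots b_0=a_{-n}\dots a_0\}$. A block $a_{-n}\dots a_0$ ($n\ge1$) is significant if $\mathrm{fol}(a_{-n}\dots a_0)\subsetneq\mathrm{fol}(a_{-n+1}\dots a_0)$; $0$ and $1$ are also significant.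 $\mathrm{sig}(\cdot)$ is the longest significant suffix. For $m=1$ the block $wl_1\dots l_{m-1}$ is the single symbol $w$. The two blocks being consecutive means both are right special significant blocks and there is no right special significant block of length strictly between $m$ and $n$. *)

From mathcomp Require Import all_boot.
From Stdlib Require Import ZArith ClassicalEpsilon.

Set Implicit Arguments.
Unset Strict Implicit.
Unset Printing Implicit Defensive.

(* One-sided sequences u : nat -> bool, with u i = u_(i+1) (0-based storage).
   Blocks are finite words [seq bool]. *)

Definition blk (x : nat -> bool) (i k : nat) : seq bool := mkseq (fun j => x (i + j)) k.

Definition in_lang (u : nat -> bool) (v : seq bool) : Prop :=
  exists i, blk u i (size v) = v.

Definition sturmian (u : nat -> bool) : Prop :=
  forall n, 1 <= n ->
    exists s : seq (seq bool), uniq s /\ size s = n.+1 /\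
      forall v, (size v = n /\ in_lang u v) <-> v \in s.

(* X_u^+ : closure of the shift orbit of u in {0,1}^N (product topology):
   exactly the sequences all of whose prefixes (finite cylinders) meet the orbit *)
Definition inXp (u : nat -> bool) (x : nat -> bool) : Prop :=
  forall k, in_lang u (blk x 0 k).

(* \tilde X_u : two-sided sequences all of whose right tails lie in X_u^+ *)
Definition inXt (u : nat -> bool) (b : Z -> bool) : Prop :=
  forall p : Z, inXp u (fun i : nat => b (p + Z.of_nat i)%Z).

(* fol(a_{-n} ... a_0), where a = [:: a_{-n}; ...; a_0], n = size a - 1:
   right halves b_0 b_1 ... of points b of \tilde X_u with b_{-n..0} = a *)
Definition fol (u : nat -> bool) (a : seq bool) : (nat -> bool) -> Prop :=
  fun c => inXp u c /\
    exists b : Z -> bool, inXt u b /\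
      (forall j, j < size a -> b (Z.of_nat j - Z.of_nat (size a).-1)%Z = nth false a j) /\
      (forall i : nat, c i = b (Z.of_nat i)).

Definition significant (u : nat -> bool) (a : seq bool) : Prop :=
  size a = 1 \/
  (2 <= size a /\
   (forall c, fol u a c -> fol u (behead a) c) /\
   (exists c, fol u (behead a) c /\ ~ fol u a c)).

Definition is_sig (u : nat -> bool) (v s : seq bool) : Prop :=
  suffix s v /\ significant u s /\
  forall t, suffix t v -> significant u t -> size t <= size s.

Definition sig (u : nat -> bool) (v : seq bool) : seq bool :=
  epsilon (inhabits [::]) (is_sig u v).

Definition right_special (u : nat -> bool) (v : seq bool) : Prop :=
  in_lang u (rcons v false) /\ in_lang u (rcons v true).

(* l : nat -> bool is the left special sequence, l i = l_(i+1):
   every prefix L_n = l_1 ... l_n is left special *)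
Definition left_special_seq (u l : nat -> bool) : Prop :=
  forall n, in_lang u (false :: blk l 0 n) /\ in_lang u (true :: blk l 0 n).

Definition rs_significant (u : nat -> bool) (v : seq bool) : Prop :=
  right_special u v /\ significant u v.

Definition consecutive_rss (u : nat -> bool) (v1 v2 : seq bool) : Prop :=
  rs_significant u v1 /\ rs_significant u v2 /\
  forall v, size v2 < size v < size v1 -> ~ rs_significant u v.

From Stdlib Require Import ZArith Lia Classical_Prop ClassicalEpsilon.
From Stdlib Require Import FunctionalExtensionality PropExtensionality.
From mathcomp Require Import all_boot zify.

Set Implicit Arguments.
Unset Strict Implicit.
Unset Printing Implicit Defensive.

(* Right special blocks of a Sturmian language are unique in each length, so
   [w l_1 ... l_(m-1)] is a suffix of [x l_1 ... l_(n-1)].  A significant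
   suffix of [x l_1 ... l_(n-1) y] longer than [w l_1 ... l_(m-1) y] would be
   [r y] with [r] significant and right special of length strictly between [m]
   and [n], or the whole block.  The first is excluded by consecutiveness; for
   the second, significance of [x l_1 ... l_(n-1) y] would put
   [x' l_1 ... l_(n-1) y] (with [x' <> x]) in the language, and together with
   [x' l_1 ... l_n] from left speciality this makes [x' l_1 ... l_(n-1)] a
   second right special block of length [n]. *)

Lemma blkP (x : nat -> bool) i k v :
  blk x i k = v <-> size v = k /\ forall j, j < k -> x (i + j) = nth false v j.
Proof.
split=> [<-|[<- xv]]; first by rewrite size_mkseq; split=> // j lt_jk; rewrite nth_mkseq.
apply: (@eq_from_nth _ false); rewrite size_mkseq // => j lt_jk.
by rewrite nth_mkseq // xv.
Qed.

Lemma blkS (x : nat -> bool) i k : blk x i k.+1 = rcons (blk x i k) (x (i + k)).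
Proof. by rewrite /blk mkseqS. Qed.

Lemma in_lang_drop u v k : in_lang u v -> in_lang u (drop k v).
Proof.
move=> [i /blkP [_ uv]]; exists (i + k); apply/blkP; split=> // j.
by rewrite size_drop nth_drop -addnA => lt_j; apply: uv; lia.
Qed.

Lemma in_lang_extend u v : in_lang u v -> exists z, in_lang u (rcons v z).
Proof.
move=> [i /blkP [_ uv]]; exists (u (i + size v)); exists i.
by rewrite size_rcons blkS; congr rcons; apply/blkP.
Qed.

Lemma right_special_suffix u r v :
  suffix r v -> right_special u v -> right_special u r.
Proof.
move=> /suffixP [p ->] [h0 h1].
have drop_p z : rcons r z = drop (size p) (rcons (p ++ r) z).
  by rewrite rcons_cat drop_size_cat.
by split; rewrite drop_p; apply: in_lang_drop.
Qed.

Definition next_letter (u : nat -> bool) (v : seq bool) : bool :=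
  if excluded_middle_informative (in_lang u (rcons v false)) then false else true.

Lemma in_lang_next_letter u v : in_lang u v -> in_lang u (rcons v (next_letter u v)).
Proof.
rewrite /next_letter; case: excluded_middle_informative => // _ /in_lang_extend [[] //].
Qed.

(* Two distinct right special blocks of length [k] would give, besides one
   extension of every block of length [k], two further blocks of length
   [k + 1]: at least [k + 3] of them instead of [k + 2]. *)
Lemma right_special_unique u v1 v2 : sturmian u ->
  right_special u v1 -> right_special u v2 -> size v1 = size v2 -> v1 = v2.
Proof.
move=> st rs1 rs2; case def_k : (size v2) => [|k] eq_size.
  by move/size0nil: eq_size => ->; move/size0nil: def_k => ->.
apply: NNPP => neq12.
have [s [uniq_s [size_s sP]]] := st k.+1 isT.
have [s' [_ [size_s' s'P]]] := st k.+2 isT.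
pose f v := rcons v (next_letter u v).
pose g v := rcons v (~~ next_letter u v).
have g_notin v : g v \notin map f s.
  by apply/mapP => -[v' _ /rcons_inj [<-]]; case: next_letter.
have uniq_L : uniq (g v1 :: g v2 :: map f s).
  have f_inj : injective f by move=> p q /rcons_inj [].
  have neq_g : g v1 != g v2 by apply/eqP => /rcons_inj [].
  by rewrite /= inE negb_or neq_g !g_notin map_inj_uniq.
have sub_L : {subset g v1 :: g v2 :: map f s <= s'}.
  move=> z; rewrite 2!in_cons => /orP [/eqP ->|/orP [/eqP ->|/mapP [v /sP [sz lv] ->]]].
  - apply/s'P; rewrite size_rcons eq_size; split=> //.
    by rewrite /g; case: rs1; case: (~~ next_letter u v1).
  - apply/s'P; rewrite size_rcons def_k; split=> //.
    by rewrite /g; case: rs2; case: (~~ next_letter u v2).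
  - by apply/s'P; rewrite size_rcons sz; split=> //; apply: in_lang_next_letter.
by have := uniq_leq_size uniq_L sub_L; rewrite /= size_map size_s size_s'; lia.
Qed.

Lemma inXt_shift u (b : Z -> bool) d : inXt u b -> inXt u (fun p => b (p + d)%Z).
Proof.
move=> hb p k; have -> : blk (fun i => b (p + Z.of_nat i + d)%Z) 0 k =
  blk (fun i => b (p + d + Z.of_nat i)%Z) 0 k by apply: eq_mkseq => i; f_equal; lia.
exact: hb.
Qed.

Lemma inXt_tail u (b : Z -> bool) p (c : nat -> bool) :
  inXt u b -> (forall i, c i = b (p + Z.of_nat i)%Z) -> inXp u c.
Proof.
move=> hb cb k; have -> : blk c 0 k = blk (fun i => b (p + Z.of_nat i)%Z) 0 k.
  by apply: eq_mkseq => i; apply: cb.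
exact: hb.
Qed.

Lemma inXt_block u (b : Z -> bool) p v :
  inXt u b -> (forall j, j < size v -> b (p + Z.of_nat j)%Z = nth false v j) ->
  in_lang u v.
Proof.
move=> hb bv; suff <- : blk (fun i => b (p + Z.of_nat i)%Z) 0 (size v) = v by apply: hb.
by apply/blkP; split.
Qed.

Lemma fol_behead u a c : fol u a c -> fol u (behead a) c.
Proof.
case: a => [|a0 a] //= [hc [b [hb [ab cb]]]]; split=> //; exists b; split=> //.
split=> // j lt_j; rewrite -[nth _ a j]/(nth false (a0 :: a) j.+1) -ab //.
by rewrite -[(size (a0 :: a)).-1]/(size a); f_equal; lia.
Qed.

Lemma fol_rcons u a y c : a != [::] ->
  fol u (rcons a y) c <->
  c 0 = y /\ fol u a (fun i => if i is i'.+1 then c i' else last false a).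
Proof.
case def_k : (size a) => [|k]; first by move/size0nil: def_k => ->.
move=> _; set c' := fun i => _.
have nth_a j : j < k.+1 -> nth false (rcons a y) j = nth false a j.
  by rewrite nth_rcons def_k => ->.
have nth_y : nth false (rcons a y) k.+1 = y by rewrite nth_rcons def_k ltnn eqxx.
have last_a : last false a = nth false a k by rewrite -nth_last def_k.
rewrite /fol size_rcons def_k !succnK.
split=> [[_ [b [hb [ab cb]]]]|[c0 [_ [b [hb [ab cb]]]]]].
- have c'b i : c' i = b (-1 + Z.of_nat i)%Z.
    case: i => [|i]; last by rewrite /c' cb; f_equal; lia.
    by rewrite /c' last_a -nth_a // -ab //; f_equal; lia.
  split; first by rewrite cb -nth_y -ab //; f_equal; lia.
  split; first exact: inXt_tail c'b.
  exists (fun p => b (p + -1)%Z); split; first exact: inXt_shift.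
  split=> [j lt_j|i]; last by rewrite c'b; f_equal; lia.
  by rewrite -nth_a // -(ab j (ltnW lt_j)); f_equal; lia.
- have cb' i : c i = b (1 + Z.of_nat i)%Z by rewrite -[c i]/(c' i.+1) cb; f_equal; lia.
  split; first exact: inXt_tail cb'.
  exists (fun p => b (p + 1)%Z); split; first exact: inXt_shift.
  split=> [j|i]; last by rewrite cb'; f_equal; lia.
  rewrite ltnS leq_eqVlt => /orP [/eqP ->|lt_j].
    by rewrite nth_y -c0 cb'; f_equal; lia.
  by rewrite nth_a // -ab //; f_equal; lia.
Qed.

Lemma significant_rcons u r y :
  2 <= size r -> significant u (rcons r y) -> significant u r.
Proof.
case: r => [|a0 [|a1 r]] // _ [|[_ [_ [c [fol_c not_fol_c]]]]].
  by rewrite size_rcons.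
right; split=> //; split=> [c'|]; first exact: fol_behead.
have [c0 fol_c'] := (fol_rcons u y c (isT : a1 :: r != [::])).1 fol_c.
exists (fun i => if i is i'.+1 then c i' else last false (a1 :: r)); split=> //.
by move=> fol_c''; apply: not_fol_c; apply/(fol_rcons u y c (isT : a0 :: a1 :: r != [::])).
Qed.

(* A point witnessing the significance of [a v] must be preceded by the other
   letter. *)
Lemma significant_cons_lang u a v :
  v != [::] -> significant u (a :: v) -> in_lang u (~~ a :: v).
Proof.
case def_k : (size v) => [|k]; first by move/size0nil: def_k => ->.
move=> _ [|[_ [_ [c [[hc [b [hb [vb cb]]]] not_fol_c]]]]].
  by rewrite -[size _]/(size v).+1 def_k.
rewrite def_k succnK in vb.
set z := b (- Z.of_nat k.+1)%Z.
have zv j : j < k.+2 -> b (Z.of_nat j - Z.of_nat k.+1)%Z = nth false (z :: v) j.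
  case: j => [_|j lt_j]; first by rewrite [nth _ _ 0]/= /z; f_equal; lia.
  by rewrite -[nth _ _ j.+1]/(nth false v j) -vb //; f_equal; lia.
have z_neq_a : z != a.
  apply/eqP => za; apply: not_fol_c; split=> //; exists b; split=> //.
  by rewrite -[size (a :: v)]/(size v).+1 def_k succnK -za.
have -> : ~~ a = z by move: z_neq_a; case: (z); case: (a).
apply: (inXt_block (p := (- Z.of_nat k.+1)%Z) hb) => j.
by rewrite -[size _]/(size v).+1 def_k => /zv <-; f_equal; lia.
Qed.

Lemma not_significant_rcons u x v y : sturmian u ->
  right_special u (x :: v) -> in_lang u (~~ x :: rcons v (~~ y)) ->
  ~ significant u (x :: rcons v y).
Proof.
move=> st xv_rs nxv_ny /significant_cons_lang nxv_y.
have /nxv_y {}nxv_y : rcons v y != [::] by case: (v).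
have nxv_rs : right_special u (~~ x :: v) by split; case: (y) nxv_y nxv_ny.
by have [] := right_special_unique st xv_rs nxv_rs erefl; case: (x).
Qed.

Lemma suffix_of_suffix_size (T : eqType) (s1 s2 s : seq T) :
  suffix s1 s -> suffix s2 s -> size s1 <= size s2 -> suffix s1 s2.
Proof.
move=> s1s s2s le12; have := size_suffix s1s; have := size_suffix s2s.
move: s1s s2s; rewrite !suffixE => /eqP def_s1 /eqP def_s2 le2 le1.
apply/eqP; rewrite -{2}def_s2 drop_drop -[RHS]def_s1; congr drop; lia.
Qed.

Lemma sig_eq_suffix u A B : suffix B A ->
  (forall t, suffix t A -> significant u t -> size t <= size B) ->
  sig u A = sig u B.
Proof.
move=> BA bound; rewrite /sig; congr epsilon.
apply: functional_extensionality => s; apply: propositional_extensionality.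
split=> [[sA [s_sig max_s]]|[sB [s_sig max_s]]].
- split; first exact: suffix_of_suffix_size sA BA (bound _ sA s_sig).
  by split=> // t tB; apply: max_s; apply: suffix_trans tB BA.
- split; first exact: suffix_trans sB BA.
  split=> // t tA t_sig; apply: max_s (t_sig).
  exact: suffix_of_suffix_size tA BA (bound _ tA t_sig).
Qed.

Lemma consecutive_rss_sig_suffix_size u V W y :
  consecutive_rss u V W -> W != [::] -> ~ significant u (rcons V y) ->
  forall t, suffix t (rcons V y) -> significant u t -> size t <= (size W).+1.
Proof.
move=> [[V_rs _] [_ gap]] W0 V_nsig t.
case/lastP: t => [|r z] //; rewrite suffix_rcons size_rcons ltnS.
move=> /andP [/eqP -> rV] sig_ry; rewrite leqNgt; apply/negP => lt_W_r.
have W_pos : 0 < size W by rewrite lt0n size_eq0.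
have sig_r : significant u r := significant_rcons (leq_ltn_trans W_pos lt_W_r) sig_ry.
have [r_eq|r_neq] := eqVneq r V; first by apply: V_nsig; rewrite -r_eq.
have lt_r_V : size r < size V.
  rewrite ltn_neqAle size_suffix // andbT; apply: contra r_neq => /eqP eq_size.
  by move: rV; rewrite suffixE eq_size subnn drop0 eq_sym.
by apply: (gap r); [rewrite lt_W_r lt_r_V | split=> //; apply: right_special_suffix rV V_rs].
Qed.

Theorem lemma4p11 (u l : nat -> bool) (n m : nat) (x w y : bool) :
  sturmian u ->
  left_special_seq u l ->
  1 <= m < n ->
  consecutive_rss u (x :: blk l 0 n.-1) (w :: blk l 0 m.-1) ->
  y != l n.-1 ->
  sig u (rcons (x :: blk l 0 n.-1) y) = sig u (rcons (w :: blk l 0 m.-1) y).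
Proof.
move=> st ls /andP [m_gt0 lt_mn] cons_VW y_neq.
have [[V_rs _] [[W_rs _] _]] := cons_VW.
have WV : suffix (w :: blk l 0 m.-1) (x :: blk l 0 n.-1).
  rewrite -(right_special_unique st (right_special_suffix (suffix_drop _ (n - m)) V_rs) W_rs).
    exact: suffix_drop.
  by rewrite size_drop /= !size_mkseq; lia.
apply: sig_eq_suffix; first by rewrite suffix_rcons eqxx.
rewrite size_rcons; apply: consecutive_rss_sig_suffix_size cons_VW isT _.
apply: not_significant_rcons st V_rs _.
have -> : ~~ y = l n.-1 by move: y_neq; case: (y); case: (l _).
have := blkS l 0 n.-1; rewrite add0n prednK ?(leq_trans m_gt0 (ltnW lt_mn)) // => <-.
by case: (x) (ls n) => -[].
Qed.
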